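(* Let $G=(V,E,c_V,c_E)$ be a capacitated graph such that, in the execution of Rising-Tide on $G$, no two vertices become saturated simultaneously, and let $\mu$ be the output of Rising-Tide on $G$ and $D_G$ its dependency graph. Then: (1) for any two edges $e_1,e_2\in E$, if $e_1$ is removed from the working set $E'$ before $e_2$, then $\mu(e_1)<\mu(e_2)$; (2) for each $u\in V$, all edges directed towards $u$ in $D_G$ have the same $\mu$-value; (3) for any edge $u\to v$ of $D_G$ and any edge $(v,w)\in E$, $\mu(u,v)\ge\mu(v,w)$; (4) for any walk $u_0\to u_1\to u_2\to\cdots$ in $D_G$, $\mu(u_0,u_1)\ge\mu(u_1,u_2)\ge\cdots$; (5) $D_G$ is a directed acyclic graph.
   Context: Capacitated graphs have nonnegative vertex capacities $c_V$ and edge capacities $c_E$; edges may include self-loops, and in $\sum_j\mu(i,j)$ a self-loop at $i$ counts once. A feasible fractional matching $\mu:E\to\mathbb{R}_{\ge0}$ satisfies $\mu(e)\le c_E(e)$ and $\sum_j\mu(i,j)\le c_V(i)$. Vertex $i$ is saturated if $\sum_j\mu(i,j)=c_V(i)$; edge $e$ is saturated if $\mu(e)=c_E(e)$. Rising-Tide: set $E'=\{e\in E:c_E(e)>0\}$ and $\mu\equiv0$; while $E'\ne\emptyset$: choose the maximum $\delta\ge0$ such that $\mu+\delta\mathbf{1}_{E'}$ is feasible, set $\mu\gets\mu+\delta\mathbf{1}_{E'}$, and remove from $E'$ every edge $(i,j)$ such that $i$, $j$, or $(i,j)$ is saturated; return $\mu$. Dependency graph $D_G$: the directed graph on vertex set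 $V$ which, for each edge $(i,j)\in E$, contains the directed edge $j\to i$ if $i$ is saturated at the moment $(i,j)$ is removed from $E'$, and contains $i\to j$ if $j$ is saturated at that moment (possibly both). *)

From HB Require Import structures.
From mathcomp Require Import all_boot all_order all_algebra.
From mathcomp Require Import reals.
Set Implicit Arguments. Unset Strict Implicit. Unset Printing Implicit Defensive.
Import Order.TTheory GRing.Theory Num.Theory.
Local Open Scope ring_scope.

(* Edges: E : {set {set V}}, each edge being a set of
   one (self-loop (i,i) = [set i]) or two (edge (i,j) = [set i; j]) vertices. *)

Definition cap_graph (R : realType) (V : finType) (E : {set {set V}})
    (cV : V -> R) (cE : {set V} -> R) : Prop :=
  [/\ forall e, e \in E -> (0 < #|e| <= 2)%N,
      forall i, 0 <= cV i &
      forall e, e \in E -> 0 <= cE e].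

(* sum_j mu(i,j); a self-loop (j = i, edge [set i]) is counted once *)
Definition load (R : realType) (V : finType) (E : {set {set V}})
    (mu : {set V} -> R) (i : V) : R :=
  \sum_(j : V | [set i; j] \in E) mu [set i; j].

Definition feasible (R : realType) (V : finType) (E : {set {set V}})
    (cV : V -> R) (cE : {set V} -> R) (mu : {set V} -> R) : Prop :=
  (forall e, e \in E -> 0 <= mu e <= cE e) /\
  (forall i, load E mu i <= cV i).

Definition vsat (R : realType) (V : finType) (E : {set {set V}})
    (cV : V -> R) (mu : {set V} -> R) (i : V) : bool :=
  load E mu i == cV i.

Definition esat (R : realType) (V : finType) (cE : {set V} -> R)
    (mu : {set V} -> R) (e : {set V}) : bool :=
  mu e == cE e.

Definition tide_step (R : realType) (V : finType) (mu : {set V} -> R)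
    (Ep : {set {set V}}) (delta : R) : {set V} -> R :=
  fun e => mu e + (if e \in Ep then delta else 0).

Definition removable (R : realType) (V : finType) (E : {set {set V}})
    (cV : V -> R) (cE : {set V} -> R) (mu : {set V} -> R) (e : {set V}) : bool :=
  esat cE mu e || [exists i in e, vsat E cV mu i].

(* An execution of Rising-Tide with n iterations of the while loop:
   mu k and Ep k are the matching and the working set E' before iteration k+1
   (mu 0 = 0, Ep 0 = {e | c_E(e) > 0}); the loop stops at Ep n = set0. *)
Definition rising_tide_run (R : realType) (V : finType) (E : {set {set V}})
    (cV : V -> R) (cE : {set V} -> R) (n : nat)
    (mu : nat -> {set V} -> R) (Ep : nat -> {set {set V}}) : Prop :=
  [/\ mu 0%N = (fun _ => 0),
      Ep 0%N = [set e in E | 0 < cE e],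
      Ep n = set0,
      (forall k, (k < n)%N -> Ep k != set0) &
      (forall k, (k < n)%N -> exists delta : R,
         [/\ 0 <= delta,
             feasible E cV cE (tide_step (mu k) (Ep k) delta),
             (forall d, 0 <= d -> feasible E cV cE (tide_step (mu k) (Ep k) d)
                        -> d <= delta),
             mu k.+1 = tide_step (mu k) (Ep k) delta &
             Ep k.+1 = [set e in Ep k | ~~ removable E cV cE (mu k.+1) e]])].

(* edge e is removed from E' during iteration k+1 (k < n) *)
Definition removed_at (V : finType) (n : nat) (Ep : nat -> {set {set V}})
    (e : {set V}) (k : nat) : bool :=
  [&& (k < n)%N, e \in Ep k & e \notin Ep k.+1].

(* vertex v becomes saturated at step k (k = 0: already saturated by mu = 0) *)
Definition first_sat (R : realType) (V : finType) (E : {set {set V}})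
    (cV : V -> R) (mu : nat -> {set V} -> R) (v : V) (k : nat) : Prop :=
  vsat E cV (mu k) v /\ forall k', (k' < k)%N -> ~~ vsat E cV (mu k') v.

Definition depgraph (R : realType) (V : finType) (E : {set {set V}})
    (cV : V -> R) (n : nat) (mu : nat -> {set V} -> R)
    (Ep : nat -> {set {set V}}) : rel V :=
  fun u v => [exists k : 'I_n, removed_at n Ep [set u; v] k
                               && vsat E cV (mu k.+1) v].

From HB Require Import structures.
From mathcomp Require Import all_boot all_order all_algebra.
From mathcomp Require Import reals.
Set Implicit Arguments. Unset Strict Implicit. Unset Printing Implicit Defensive.
Import Order.TTheory GRing.Theory Num.Theory.
Local Open Scope ring_scope.

(* The edges still in E' always carry the current maximum value, and every
   step after the first that removes an edge raises them by a positive amount;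
   so edges removed later end with larger values.  An edge (u,v) of D_G is
   removed when v saturates, after which no edge at v is left in E', so no edge
   at v ends above mu(u,v); likewise a vertex saturated at some time only points
   in D_G to vertices saturated no later.  A cycle through u -> v thus makes u
   saturated when (u,v) is removed.  If that step raised (u,v), neither u nor v
   was saturated before it; otherwise it is the first step and both were
   saturated from the start.  Either way u and v saturate simultaneously. *)

Lemma homo_leq_range (T : Type) (r : T -> T -> Prop) (f : nat -> T) (i n : nat) :
    (forall x, r x x) -> (forall y x z, r x y -> r y z -> r x z) ->
    (forall k, (i <= k < n)%N -> r (f k) (f k.+1)) ->
  forall j, (i <= j <= n)%N -> r (f i) (f j).
Proof.
move=> r_refl r_trans f_step; elim=> [|j IH] /andP[ij jn].
  by move: ij; rewrite leqn0 => /eqP->.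
move: ij; rewrite leq_eqVlt ltnS => /orP[/eqP<- // | ij].
by apply: r_trans (IH _) (f_step j _); rewrite ij ?jn ?(ltnW jn).
Qed.

Lemma tide_step0 (R : realType) (V : finType) (mu : {set V} -> R)
    (Ep : {set {set V}}) :
  tide_step mu Ep 0 = mu.
Proof.
by apply: boolp.funext => e; rewrite /tide_step; case: ifP; rewrite addr0.
Qed.

Lemma tide_step_le (R : realType) (V : finType) (mu : {set V} -> R)
    (Ep : {set {set V}}) (d : R) (e f : {set V}) :
    0 <= d -> mu e <= mu f -> f \in Ep ->
  tide_step mu Ep d e <= tide_step mu Ep d f.
Proof. by move=> d0 le_ef fEp; rewrite /tide_step fEp lerD //; case: ifP. Qed.

Lemma ler_load (R : realType) (V : finType) (E : {set {set V}})
    (mu1 mu2 : {set V} -> R) x :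
  (forall e, mu1 e <= mu2 e) -> load E mu1 x <= load E mu2 x.
Proof. by move=> le12; apply: ler_sum => y _. Qed.

Lemma ltr_load (R : realType) (V : finType) (E : {set {set V}})
    (mu1 mu2 : {set V} -> R) x y :
    (forall e, mu1 e <= mu2 e) -> [set x; y] \in E ->
  mu1 [set x; y] < mu2 [set x; y] -> load E mu1 x < load E mu2 x.
Proof.
move=> le12 xyE lt_xy; rewrite /load (bigD1 y) // [X in _ < X](bigD1 y) //=.
by apply: ltr_leD => //; apply: ler_sum.
Qed.

Lemma path_pairmap_sorted (T : eqType) (R : realType) (D : rel T)
    (f : T -> T -> R) :
    (forall u v w, D u v -> D v w -> f v w <= f u v) ->
  forall u0 s, path D u0 s -> sorted (fun x y => y <= x) (pairmap f u0 s).
Proof.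
move=> f_le u0 s; elim: s u0 => [|x [|y s] IH] u0 //= /andP[Dux Hp].
move: (IH x Hp) => /= ->; rewrite andbT.
by case/andP: Hp => Dxy _; apply: f_le Dxy.
Qed.

Section RisingTideRun.

Variables (R : realType) (V : finType) (E : {set {set V}}).
Variables (cV : V -> R) (cE : {set V} -> R) (n : nat).
Variables (mu : nat -> {set V} -> R) (Ep : nat -> {set {set V}}).
Hypothesis run : rising_tide_run E cV cE n mu Ep.

Local Notation D := (depgraph E cV n mu Ep).

Lemma run_step k : (k < n)%N ->
  exists d : R, [/\ 0 <= d, feasible E cV cE (mu k.+1),
    mu k.+1 = tide_step (mu k) (Ep k) d &
    Ep k.+1 = [set e in Ep k | ~~ removable E cV cE (mu k.+1) e]].
Proof.
move=> kn; case: run => _ _ _ _ /(_ k kn)[d [d0 feas _ mu_k1 Ep_k1]].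
by exists d; split => //; rewrite mu_k1.
Qed.

Lemma Ep_sub i j : (i <= j <= n)%N -> Ep j \subset Ep i.
Proof.
apply: (@homo_leq_range _ (fun A B => B \subset A) Ep) => [A|B A C|k /andP[_ kn]].
- exact: subxx.
- by move=> AB BC; apply: subset_trans BC AB.
- have [d [_ _ _ ->]] := run_step kn.
  by apply/subsetP => e; rewrite inE => /andP[].
Qed.

Lemma Ep_subE k : (k <= n)%N -> Ep k \subset E.
Proof.
move=> kn; apply: subset_trans (@Ep_sub 0 k _) _; first by rewrite leq0n.
by case: run => _ -> _ _ _; apply/subsetP => e; rewrite inE => /andP[].
Qed.

Lemma mu_le i j e : (i <= j <= n)%N -> mu i e <= mu j e.
Proof.
apply: (@homo_leq_range _ (fun x y => x <= y) (fun k => mu k e)).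
- exact: lexx.
- exact: le_trans.
- move=> k /andP[_ kn]; have [d [d0 _ -> _]] := run_step kn.
  by rewrite /tide_step lerDl; case: ifP.
Qed.

Lemma mu_inactive i j e : e \notin Ep i -> (i <= j <= n)%N -> mu j e = mu i e.
Proof.
move=> eNi ijn; symmetry; move: ijn.
apply: (@homo_leq_range _ eq (fun k => mu k e)) => // [y x z -> //|].
move=> k /andP[ik kn]; have [d [_ _ -> _]] := run_step kn.
have eNk : e \notin Ep k.
  by apply: contra eNi; apply/subsetP/Ep_sub; rewrite ik ltnW.
by rewrite /tide_step (negbTE eNk) addr0.
Qed.

Lemma removed_value e k : removed_at n Ep e k -> mu n e = mu k.+1 e.
Proof. by case/and3P=> kn _ eN; apply: mu_inactive; rewrite // kn leqnn. Qed.

Lemma load_le_cap k x : (k < n)%N -> load E (mu k.+1) x <= cV x.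
Proof. by move=> kn; have [d [_ [_ ->] _ _]] := run_step kn. Qed.

Lemma vsat_le i j x : vsat E cV (mu i) x -> (i <= j <= n)%N -> vsat E cV (mu j) x.
Proof.
case: j => [|j] sat_i /andP[ij jn].
  by move: ij sat_i; rewrite leqn0 => /eqP->.
move/eqP: sat_i => sat_i; apply/eqP/le_anti.
rewrite load_le_cap //= -sat_i; apply: ler_load => e.
by apply: mu_le; rewrite ij.
Qed.

Lemma active_max j e f : (j <= n)%N -> f \in Ep j -> mu j e <= mu j f.
Proof.
elim: j f => [|j IH] f jn fj; first by case: run => -> _ _ _ _.
have fj' : f \in Ep j by apply/(subsetP (@Ep_sub j j.+1 _)); rewrite // leqnSn.
have [d [d0 _ -> _]] := run_step jn.
by apply: tide_step_le; rewrite // IH // ltnW.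
Qed.

Lemma active_maxS j e f : (j < n)%N -> f \in Ep j -> mu j.+1 e <= mu j.+1 f.
Proof.
move=> jn fj; have [d [d0 _ -> _]] := run_step jn.
by apply: tide_step_le; rewrite // active_max // ltnW.
Qed.

Lemma active_before_sat j k e x :
  (k <= n)%N -> e \in Ep k -> x \in e -> vsat E cV (mu j.+1) x -> (k <= j)%N.
Proof.
move=> kn ek xe sat_x; rewrite leqNgt; apply/negP => jk.
have jn : (j < n)%N := leq_trans jk kn.
have := subsetP (@Ep_sub j.+1 k _) e ek; rewrite jk kn => /(_ isT).
have [d [_ _ _ ->]] := run_step jn.
rewrite inE negb_or => /and3P[_ _ /existsPn/(_ x)].
by rewrite xe sat_x.
Qed.

Lemma mu_stall k e :
  (k < n)%N -> e \in Ep k -> mu k.+1 e <= mu k e -> mu k.+1 = mu k.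
Proof.
move=> kn ek; have [d [d0 _ mu_k1 _]] := run_step kn.
rewrite {1}mu_k1 /tide_step ek gerDl => d_le0.
by rewrite mu_k1 (@le_anti _ _ d 0) ?d0 ?d_le0 // tide_step0.
Qed.

(* For k > 0 the edges of Ep k already survived the removal test against
   mu k, so repeating it changes nothing. *)
Lemma Ep_stall k : (0 < k < n)%N -> mu k.+1 = mu k -> Ep k.+1 = Ep k.
Proof.
case: k => [|k] // /andP[_ kn] mu_k2.
have [_ [_ _ _ Ep_k2]] := run_step kn.
have [_ [_ _ _ Ep_k1]] := run_step (ltnW kn).
rewrite Ep_k2 mu_k2; apply/setP => e; rewrite inE.
by case: (boolP (e \in Ep k.+1)) => //=; rewrite {1}Ep_k1 inE => /andP[].
Qed.

Lemma removal_raises e k :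
  (0 < k)%N -> removed_at n Ep e k -> mu k e < mu k.+1 e.
Proof.
move=> k0 /and3P[kn ek eN]; rewrite ltNge; apply/negP => /(mu_stall kn ek) stall.
by move: eN; rewrite (Ep_stall _ stall) ?ek // k0.
Qed.

Lemma raised_unsat k x y :
  (k < n)%N -> [set x; y] \in Ep k -> mu k [set x; y] < mu k.+1 [set x; y] ->
  ~~ vsat E cV (mu k) x.
Proof.
move=> kn xyk raise; apply/negP => /eqP sat_x.
have xyE : [set x; y] \in E by apply/(subsetP (Ep_subE (ltnW kn))).
have mu_k_le e : mu k e <= mu k.+1 e by apply: mu_le; rewrite leqnSn.
by have := ltr_load mu_k_le xyE raise; rewrite sat_x ltNge load_le_cap.
Qed.

Lemma removal_order e1 e2 k1 k2 :
  (k1 < k2)%N -> removed_at n Ep e1 k1 -> removed_at n Ep e2 k2 ->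
  mu n e1 < mu n e2.
Proof.
move=> k12 rm1 rm2; rewrite (removed_value rm1) (removed_value rm2).
case/and3P: (rm1) (rm2) => k1n _ _ /and3P[k2n e2k2 _].
have e2k1 : e2 \in Ep k1.
  by apply: (subsetP (@Ep_sub k1 k2 _)) e2k2; rewrite (ltnW k12) ltnW.
apply: le_lt_trans (active_maxS e1 k1n e2k1) _.
apply: le_lt_trans (removal_raises (leq_ltn_trans (leq0n _) k12) rm2).
by apply: mu_le; rewrite k12 ltnW.
Qed.

Lemma depgraph_removal u v :
  D u v -> exists2 k, removed_at n Ep [set u; v] k & vsat E cV (mu k.+1) v.
Proof. by case/existsP=> k /andP[rm sat_v]; exists k. Qed.

Lemma removed_before_sat e k j x :
  removed_at n Ep e k -> x \in e -> vsat E cV (mu j.+1) x -> (k <= j)%N.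
Proof. by case/and3P=> kn ek _; apply: active_before_sat (ltnW kn) ek. Qed.

Lemma depgraph_in_eq u a b :
  D a u -> D b u -> mu n [set a; u] = mu n [set b; u].
Proof.
case/depgraph_removal=> k1 rm1 sat1 /depgraph_removal[k2 rm2 sat2].
have u_in c : u \in [set c; u] by rewrite !inE eqxx orbT.
have k12 : k1 = k2.
  by apply/anti_leq; rewrite (removed_before_sat rm1 (u_in a) sat2)
                             (removed_before_sat rm2 (u_in b) sat1).
subst k2; rewrite (removed_value rm1) (removed_value rm2).
case/and3P: rm1 rm2 => kn auk _ /and3P[_ buk _].
by apply/le_anti; rewrite !active_maxS.
Qed.

Lemma depgraph_out_le u v w : D u v -> mu n [set v; w] <= mu n [set u; v].
Proof.
case/depgraph_removal=> k rm sat_v; case/and3P: (rm) => kn uvk _.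
have vwN : [set v; w] \notin Ep k.+1.
  apply/negP => vwk.
  by have := active_before_sat kn vwk (setU11 _ _) sat_v; rewrite ltnn.
by rewrite (removed_value rm) (mu_inactive vwN) ?kn ?leqnn // active_maxS.
Qed.

Lemma depgraph_vsat k x y :
  (k < n)%N -> D x y -> vsat E cV (mu k.+1) x -> vsat E cV (mu k.+1) y.
Proof.
move=> kn /depgraph_removal[k' rm sat_y] sat_x.
have k'k := removed_before_sat rm (setU11 _ _) sat_x.
by apply: vsat_le sat_y _; rewrite ltnS k'k kn.
Qed.

Lemma connect_vsat k x y :
  (k < n)%N -> connect D x y -> vsat E cV (mu k.+1) x -> vsat E cV (mu k.+1) y.
Proof.
move=> kn /connectP[p]; elim: p x => [|z p IH] x /=; first by move=> _ ->.
by case/andP=> Dxz pth y_last /(depgraph_vsat kn Dxz); apply: IH.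
Qed.

Lemma first_sat_succ k x :
  (k < n)%N -> vsat E cV (mu k.+1) x -> ~~ vsat E cV (mu k) x ->
  first_sat E cV mu x k.+1.
Proof.
move=> kn sat_x unsat_x; split=> // k' k'k; apply: contra unsat_x => sat'.
by apply: vsat_le sat' _; rewrite -ltnS k'k ltnW.
Qed.

Lemma depgraph_acyclic :
    (forall u v k, (k <= n)%N -> u != v ->
       first_sat E cV mu u k -> first_sat E cV mu v k -> False) ->
  forall u v, u != v -> D u v -> ~~ connect D v u.
Proof.
move=> no_tie u v uv /depgraph_removal[k rm sat_v]; case/and3P: (rm) => kn uvk _.
apply/negP => /(connect_vsat kn)/(_ sat_v) sat_u.
have [raise|stall] := ltP (mu k [set u; v]) (mu k.+1 [set u; v]).
  apply: (no_tie u v k.+1 kn uv); apply: first_sat_succ => //.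
    exact: raised_unsat raise.
  by rewrite setUC in uvk raise; apply: raised_unsat raise.
have k0 : k = 0%N.
  case: (posnP k) => // k_pos.
  by move: (removal_raises k_pos rm); rewrite ltNge stall.
subst k; move: sat_u sat_v; rewrite (mu_stall kn uvk stall) => sat_u sat_v.
by apply: (no_tie u v 0%N (leq0n n) uv); split=> // ?; rewrite ltn0.
Qed.

End RisingTideRun.

Theorem lemma20 (R : realType) (V : finType) (E : {set {set V}})
    (cV : V -> R) (cE : {set V} -> R) (n : nat)
    (mu : nat -> {set V} -> R) (Ep : nat -> {set {set V}}) :
  cap_graph E cV cE ->
  rising_tide_run E cV cE n mu Ep ->
  (* no two vertices become saturated simultaneously *)
  (forall u v k, (k <= n)%N -> u != v ->
     first_sat E cV mu u k -> first_sat E cV mu v k -> False) ->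
  let muF := mu n in
  let D := depgraph E cV n mu Ep in
  [/\ (* (1) *)
      (forall e1 e2 k1 k2, (k1 < k2)%N ->
         removed_at n Ep e1 k1 -> removed_at n Ep e2 k2 -> muF e1 < muF e2),
      (* (2) *)
      (forall u a b, D a u -> D b u -> muF [set a; u] = muF [set b; u]),
      (* (3) *)
      (forall u v w, D u v -> [set v; w] \in E -> muF [set v; w] <= muF [set u; v]),
      (* (4) *)
      (forall (u0 : V) (s : seq V), path D u0 s ->
         sorted (fun x y => y <= x) (pairmap (fun a b => muF [set a; b]) u0 s)) &
      (* (5) acyclic: no directed cycle through two distinct vertices *)
      (forall u v, u != v -> D u v -> ~~ connect D v u)].
Proof.
move=> _ run no_tie /=; split.
- exact: removal_order run.
- exact: depgraph_in_eq run.
- by move=> u v w Duv _; exact: (depgraph_out_le run w Duv).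
- apply: path_pairmap_sorted => u v w Duv _.
  exact: (depgraph_out_le run w Duv).
- exact: depgraph_acyclic run no_tie.
Qed.
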